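(* Let $R$ be a discrete valuation ring of characteristic $p>0$ with field of fractions $K$. Let $H_1$ and $H_2$ be primitively generated $R$-Hopf algebras of rank $p^n$, let $A\in M_n(R)$ be the matrix associated to $H_1$ and $B\in M_n(R)$ the matrix associated to $H_2$ (with respect to chosen $R$-bases of their modules of primitive elements). Then $H_1$ and $H_2$ are generically isomorphic if and only if there exists $\Theta=(\theta_{i,j})\in \mathrm{GL}_n(K)$ such that \[\Theta A = B\,\Theta^{(p)},\] where $\Theta^{(p)}=(\theta_{i,j}^p)$.
   Context: All Hopf algebras are commutative, cocommutative, finitely generated projective, of $p$-power rank. An element $t$ of a Hopf algebra is primitive if $\Delta(t)=t\otimes1+1\otimes t$; $\mathrm{Prim}(H)$ denotes the module of primitives; $H$ is primitively generated if generated as an algebra by its primitive elements. If $H$ is a primitively generated $R$-Hopf algebra of rank $p^n$ and $t_1,\dots,t_n$ is an $R$-basis of $\mathrm{Prim}(H)$, then $t_i^p=\sum_{j=1}^n a_{j,i}t_j$ for unique $a_{j,i}\in R$, and $A=(a_{j,i})$ (entry $a_{j,i}$ in row $j$, column $i$) is the matrix associated to $H$ with respect to this basis. Two $R$-Hopf algebras $H_1,H_2$ are generically isomorphic if $K\otimes_R H_1\cong K\otimes_R H_2$ as $K$-Hopf algebras (equivalently, they are Hopf orders in the same $K$-Hopf algebra). *)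

(* Free Hopf algebras of finite rank over a commutative ring,
   encoded by structure constants in a fixed basis e_0, ..., e_(m-1).
   Elements of H are row vectors 'rV[S]_m; elements of H (x) H are m x m
   matrices T (T i j = coefficient of e_i (x) e_j). *)
From HB Require Import structures.
From mathcomp Require Import all_boot all_order all_algebra.
Set Implicit Arguments. Unset Strict Implicit. Unset Printing Implicit Defensive.
Import Order.TTheory GRing.Theory Num.Theory.
Local Open Scope ring_scope.

Record hopf_data (S : Type) (m : nat) := HopfData {
  hm : 'I_m -> 'I_m -> 'I_m -> S;   (* e_i * e_j = \sum_k hm i j k e_k *)
  hu : 'rV[S]_m;                      (* the unit 1 *)
  hc : 'I_m -> 'I_m -> 'I_m -> S;   (* Delta e_k = \sum_(i,j) hc k i j e_i (x) e_j *)
  he : 'I_m -> S;                    (* counit eps e_k *)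
  hs : 'I_m -> 'I_m -> S            (* antipode S(e_i) = \sum_j hs i j e_j *)
}.

Section HopfOps.
Variables (S : comNzRingType) (m : nat) (H : hopf_data S m).

Definition hbasis (i : 'I_m) : 'rV[S]_m := delta_mx 0 i.

Definition hmul (x y : 'rV[S]_m) : 'rV[S]_m :=
  \row_k \sum_i \sum_j x 0 i * y 0 j * hm H i j k.

Definition hcom (x : 'rV[S]_m) : 'M[S]_m :=
  \matrix_(i, j) \sum_k x 0 k * hc H k i j.

Definition heps (x : 'rV[S]_m) : S := \sum_k x 0 k * he H k.

Definition hant (x : 'rV[S]_m) : 'rV[S]_m := \row_j \sum_i x 0 i * hs H i j.

Definition htens (x y : 'rV[S]_m) : 'M[S]_m := x^T *m y.

Definition htmul (T U : 'M[S]_m) : 'M[S]_m :=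
  \matrix_(k, l) \sum_i \sum_j \sum_i' \sum_j'
      T i j * U i' j' * hm H i i' k * hm H j j' l.

Definition hpow (x : 'rV[S]_m) (n : nat) : 'rV[S]_m := iter n (hmul x) (hu H).

Definition is_cc_hopf : Prop :=
  (forall x y z, hmul (hmul x y) z = hmul x (hmul y z)) /\
  (forall x y, hmul x y = hmul y x) /\
  (forall x, hmul (hu H) x = x) /\
  (forall x a b c, \sum_i hcom x i c * hc H i a b = \sum_j hcom x a j * hc H j b c) /\
  (forall x, hcom x = (hcom x)^T) /\
  (forall x, \row_j (\sum_i he H i * hcom x i j) = x) /\
  (forall x, \row_i (\sum_j hcom x i j * he H j) = x) /\
  (forall x y, hcom (hmul x y) = htmul (hcom x) (hcom y)) /\
  hcom (hu H) = htens (hu H) (hu H) /\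
  (forall x y, heps (hmul x y) = heps x * heps y) /\
  heps (hu H) = 1 /\
  (forall x, \sum_i \sum_j hcom x i j *: hmul (hant (hbasis i)) (hbasis j) = heps x *: hu H) /\
  (forall x, \sum_i \sum_j hcom x i j *: hmul (hbasis i) (hant (hbasis j)) = heps x *: hu H).

Definition primitive (t : 'rV[S]_m) : Prop :=
  hcom t = htens t (hu H) + htens (hu H) t.

Definition prim_generated : Prop :=
  forall P : 'rV[S]_m -> Prop,
    (forall t, primitive t -> P t) -> P (hu H) ->
    (forall x y, P x -> P y -> P (x + y)) ->
    (forall x y, P x -> P y -> P (hmul x y)) ->
    (forall a x, P x -> P (a *: x)) ->
    forall x, P x.

Definition prim_basis (n : nat) (t : 'I_n -> 'rV[S]_m) : Prop :=
  [/\ (forall i, primitive (t i)),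
      (forall c : 'I_n -> S, \sum_i c i *: t i = 0 -> forall i, c i = 0) &
      (forall x, primitive x -> exists c : 'I_n -> S, x = \sum_i c i *: t i)].

End HopfOps.

Definition hopf_map (S S' : Type) (f : S -> S') (m : nat) (H : hopf_data S m)
  : hopf_data S' m :=
  HopfData (fun i j k => f (hm H i j k)) (map_mx f (hu H))
           (fun k i j => f (hc H k i j)) (fun k => f (he H k))
           (fun i j => f (hs H i j)).

Definition hopf_iso (F : fieldType) (m : nat) (H1 H2 : hopf_data F m)
  (M : 'M[F]_m) : Prop :=
  [/\ M \in unitmx,
      (forall x y, hmul H2 (x *m M) (y *m M) = hmul H1 x y *m M),
      hu H1 *m M = hu H2,
      (forall x, hcom H2 (x *m M) = M^T *m hcom H1 x *m M) &
      (forall x, heps H2 (x *m M) = heps H1 x)].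

Definition is_dvr (R : idomainType) : Prop :=
  exists pi : R, [/\ pi != 0, pi \isn't a GRing.unit &
    forall a : R, a != 0 -> exists u k, u \is a GRing.unit /\ a = u * pi ^+ k].

Definition is_frac_field (R : idomainType) (K : fieldType) (f : {rmorphism R -> K}) : Prop :=
  injective f /\ forall x : K, exists a b : R, b != 0 /\ x = f a / f b.

Definition pg_hopf (R : comNzRingType) (p n : nat) (H : hopf_data R (p ^ n)) : Prop :=
  is_cc_hopf H /\ prim_generated H.

Definition assoc_matrix (R : comNzRingType) (p n m : nat) (H : hopf_data R m)
  (t : 'I_n -> 'rV[R]_m) (A : 'M[R]_n) : Prop :=
  prim_basis H t /\ forall i, hpow H (t i) p = \sum_j A j i *: t j.

(* Over the fraction field K both Hopf algebras remain primitively generated,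
   with the same associated matrices.  If t is a basis of Prim(H) with matrix A,
   the monomials t^a with all exponents a_i < p span H (an overflowing t_i^p is
   rewritten with A), so they form a basis of H, whose rank is p^n.  Hence two
   such Hopf algebras with the same matrix are isomorphic through the linear map
   matching monomials: it is multiplicative by construction, and it respects
   Delta and eps because it matches the primitive generators.  In characteristic
   p the p-th power is additive, so replacing the basis s by t_i = sum_j Theta_ji s_j
   turns the matrix B into A exactly when Theta A = B Theta^(p); since a Hopf
   isomorphism carries a primitive basis to a primitive basis, this conjugacy is
   also necessary. *)

From HB Require Import structures.
From mathcomp Require Import all_boot all_order all_algebra ring zify.
Set Implicit Arguments. Unset Strict Implicit. Unset Printing Implicit Defensive.
Import GRing.Theory.
Local Open Scope ring_scope.

Section Linearity.
Variables (S : comNzRingType) (m : nat) (H : hopf_data S m).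

Lemma hmulDl x y z : hmul H (x + y) z = hmul H x z + hmul H y z.
Proof.
apply/rowP=> k; rewrite !mxE -big_split /=; apply: eq_bigr => i _.
by rewrite -big_split; apply: eq_bigr => j _; rewrite !mxE !mulrDl.
Qed.

Lemma hmulZl a x y : hmul H (a *: x) y = a *: hmul H x y.
Proof.
apply/rowP=> k; rewrite !mxE mulr_sumr; apply: eq_bigr => i _.
by rewrite mulr_sumr; apply: eq_bigr => j _; rewrite !mxE; ring.
Qed.

Lemma hmulZr a x y : hmul H x (a *: y) = a *: hmul H x y.
Proof.
apply/rowP=> k; rewrite !mxE mulr_sumr; apply: eq_bigr => i _.
by rewrite mulr_sumr; apply: eq_bigr => j _; rewrite !mxE; ring.
Qed.

Lemma hcomD x y : hcom H (x + y) = hcom H x + hcom H y.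
Proof.
apply/matrixP=> i j; rewrite !mxE -big_split; apply: eq_bigr => k _.
by rewrite !mxE mulrDl.
Qed.

Lemma hcomZ a x : hcom H (a *: x) = a *: hcom H x.
Proof.
apply/matrixP=> i j; rewrite !mxE mulr_sumr; apply: eq_bigr => k _.
by rewrite !mxE mulrA.
Qed.

Lemma hcom_sum (I : Type) (r : seq I) (P : pred I) (F : I -> 'rV[S]_m) :
  hcom H (\sum_(i <- r | P i) F i) = \sum_(i <- r | P i) hcom H (F i).
Proof. by apply: (big_morph _ hcomD); rewrite -(scale0r 0) hcomZ scale0r. Qed.

Lemma hepsD x y : heps H (x + y) = heps H x + heps H y.
Proof. by rewrite /heps -big_split; apply: eq_bigr => k _; rewrite !mxE mulrDl. Qed.

Lemma hepsZ a x : heps H (a *: x) = a * heps H x.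
Proof. by rewrite /heps mulr_sumr; apply: eq_bigr => k _; rewrite !mxE mulrA. Qed.

Lemma htmulDl T1 T2 U : htmul H (T1 + T2) U = htmul H T1 U + htmul H T2 U.
Proof.
apply/matrixP=> k l; rewrite !mxE -big_split; apply: eq_bigr => i _.
rewrite -big_split; apply: eq_bigr => j _; rewrite -big_split; apply: eq_bigr => i' _.
by rewrite -big_split; apply: eq_bigr => j' _; rewrite !mxE !mulrDl.
Qed.

Lemma htmulDr T U1 U2 : htmul H T (U1 + U2) = htmul H T U1 + htmul H T U2.
Proof.
apply/matrixP=> k l; rewrite !mxE -big_split; apply: eq_bigr => i _.
rewrite -big_split; apply: eq_bigr => j _; rewrite -big_split; apply: eq_bigr => i' _.
by rewrite -big_split; apply: eq_bigr => j' _; rewrite !mxE mulrDr !mulrDl.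
Qed.

Lemma htmulZl a T U : htmul H (a *: T) U = a *: htmul H T U.
Proof.
apply/matrixP=> k l; rewrite !mxE mulr_sumr; apply: eq_bigr => i _.
rewrite mulr_sumr; apply: eq_bigr => j _; rewrite mulr_sumr; apply: eq_bigr => i' _.
by rewrite mulr_sumr; apply: eq_bigr => j' _; rewrite !mxE !mulrA.
Qed.

Lemma htmulZr a T U : htmul H T (a *: U) = a *: htmul H T U.
Proof.
apply/matrixP=> k l; rewrite !mxE mulr_sumr; apply: eq_bigr => i _.
rewrite mulr_sumr; apply: eq_bigr => j _; rewrite mulr_sumr; apply: eq_bigr => i' _.
by rewrite mulr_sumr; apply: eq_bigr => j' _; rewrite !mxE; ring.
Qed.

Lemma htmul_suml (I : Type) (r : seq I) (P : pred I) (F : I -> 'M[S]_m) U :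
  htmul H (\sum_(i <- r | P i) F i) U = \sum_(i <- r | P i) htmul H (F i) U.
Proof.
apply: (big_morph (htmul H ^~ U) (fun T1 T2 => htmulDl T1 T2 U)).
by rewrite -[0 in LHS](scale0r (0 : 'M[S]_m)) htmulZl scale0r.
Qed.

Lemma htmul_sumr (I : Type) (r : seq I) (P : pred I) (F : I -> 'M[S]_m) U :
  htmul H U (\sum_(i <- r | P i) F i) = \sum_(i <- r | P i) htmul H U (F i).
Proof.
apply: (big_morph (htmul H U) (htmulDr U)).
by rewrite -[0 in LHS](scale0r (0 : 'M[S]_m)) htmulZr scale0r.
Qed.

Lemma htensE (a b : 'rV[S]_m) i j : htens a b i j = a 0 i * b 0 j.
Proof. by rewrite !mxE big_ord1 !mxE. Qed.

Lemma htmul_tens (a b c d : 'rV[S]_m) :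
  htmul H (htens a b) (htens c d) = htens (hmul H a c) (hmul H b d).
Proof.
apply/matrixP=> k l; rewrite htensE !mxE mulr_suml; apply: eq_bigr => i _.
rewrite mulr_suml exchange_big /=; apply: eq_bigr => i' _.
rewrite mulr_sumr; apply: eq_bigr => j _; rewrite mulr_sumr.
by apply: eq_bigr => j' _; rewrite !htensE; ring.
Qed.

Lemma htens_basis_sum (T : 'M[S]_m) :
  T = \sum_i \sum_j T i j *: htens (hbasis S i) (hbasis S j).
Proof.
rewrite {1}(matrix_sum_delta T); apply: eq_bigr => i _; apply: eq_bigr => j _.
by rewrite /htens /hbasis trmx_delta mul_delta_mx.
Qed.

Lemma primitive_sum n (s : 'I_n -> 'rV[S]_m) (c : 'I_n -> S) :
  (forall i, primitive H (s i)) -> primitive H (\sum_i c i *: s i).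
Proof.
move=> s_prim; rewrite /primitive hcom_sum.
under eq_bigr => i _ do rewrite hcomZ s_prim.
apply/matrixP=> i j; rewrite summxE mxE !htensE !summxE.
rewrite mulr_suml mulr_sumr -big_split; apply: eq_bigr => k _.
by rewrite mxE [X in _ * X]mxE !htensE !mxE mulrDr; congr (_ + _); ring.
Qed.

Lemma primitiveZ a x : primitive H x -> primitive H (a *: x).
Proof.
rewrite /primitive hcomZ /htens linearZ /= -scalemxAl -scalemxAr -scalerDr.
by move=> ->.
Qed.

End Linearity.

Section LinearCombinations.
Variables (R : comNzRingType) (V : lmodType R) (n : nat).

Lemma sum_scale_mulmx l (v : 'I_n -> V) (X : 'M[R]_n) (Y : 'M[R]_(n, l)) i :
  \sum_j Y j i *: \sum_k X k j *: v k = \sum_k (X *m Y) k i *: v k.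
Proof.
under eq_bigr => j _ do rewrite scaler_sumr.
rewrite exchange_big /=; apply: eq_bigr => k _; rewrite mxE scaler_suml.
by apply: eq_bigr => j _; rewrite scalerA mulrC.
Qed.

Lemma sum_scale_mx1 (v : 'I_n -> V) i : \sum_k (1%:M : 'M[R]_n) k i *: v k = v i.
Proof.
rewrite (bigD1 i) //= mxE eqxx scale1r big1 ?addr0 // => k /negbTE ki.
by rewrite mxE ki scale0r.
Qed.

Lemma free_coef_mx_eq l (v : 'I_n -> V) (X Y : 'M[R]_(n, l)) :
  (forall c : 'I_n -> R, \sum_i c i *: v i = 0 -> forall i, c i = 0) ->
  (forall i, \sum_k X k i *: v k = \sum_k Y k i *: v k) -> X = Y.
Proof.
move=> v_free eqXY; apply/matrixP => k i; apply/eqP; rewrite -subr_eq0; apply/eqP.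
apply: (v_free (fun k => X k i - Y k i)).
by under eq_bigr => j _ do rewrite scalerBl; rewrite sumrB eqXY subrr.
Qed.

End LinearCombinations.

Definition conj_tens (S : comNzRingType) m (M T : 'M[S]_m) := M^T *m T *m M.

Section ConjTens.
Variables (S : comNzRingType) (m : nat) (M : 'M[S]_m).

Lemma conj_tensD T U : conj_tens M (T + U) = conj_tens M T + conj_tens M U.
Proof. by rewrite /conj_tens mulmxDr mulmxDl. Qed.

Lemma conj_tensZ a T : conj_tens M (a *: T) = a *: conj_tens M T.
Proof. by rewrite /conj_tens -scalemxAr -scalemxAl. Qed.

Lemma conj_tens_sum (I : Type) (r : seq I) (P : pred I) (F : I -> 'M[S]_m) :
  conj_tens M (\sum_(i <- r | P i) F i) = \sum_(i <- r | P i) conj_tens M (F i).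
Proof. by rewrite /conj_tens mulmx_sumr mulmx_suml. Qed.

Lemma conj_tens_htens a b : conj_tens M (htens a b) = htens (a *m M) (b *m M).
Proof. by rewrite /conj_tens /htens trmx_mul !mulmxA. Qed.

Lemma conj_tens_primitive (H1 H2 : hopf_data S m) x :
  hu H1 *m M = hu H2 -> primitive H1 x ->
  conj_tens M (hcom H1 x) = htens (x *m M) (hu H2) + htens (hu H2) (x *m M).
Proof. by move=> huM ->; rewrite conj_tensD !conj_tens_htens huM. Qed.

Lemma conj_tens_htmul (H1 H2 : hopf_data S m) :
  (forall a b, hmul H2 (a *m M) (b *m M) = hmul H1 a b *m M) ->
  forall T U, htmul H2 (conj_tens M T) (conj_tens M U) = conj_tens M (htmul H1 T U).
Proof.
move=> hmulM.
have pure a b c d : htmul H2 (conj_tens M (htens a b)) (conj_tens M (htens c d)) =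
                    conj_tens M (htmul H1 (htens a b) (htens c d)).
  by rewrite !conj_tens_htens !htmul_tens !hmulM conj_tens_htens.
have pure_l a b U : htmul H2 (conj_tens M (htens a b)) (conj_tens M U) =
                    conj_tens M (htmul H1 (htens a b) U).
  rewrite (htens_basis_sum U) conj_tens_sum htmul_sumr htmul_sumr conj_tens_sum.
  apply: eq_bigr => k _; rewrite conj_tens_sum htmul_sumr htmul_sumr conj_tens_sum.
  apply: eq_bigr => l _; by rewrite !conj_tensZ htmulZr htmulZr conj_tensZ pure.
move=> T U; rewrite (htens_basis_sum T) conj_tens_sum htmul_suml htmul_suml conj_tens_sum.
apply: eq_bigr => i _; rewrite conj_tens_sum htmul_suml htmul_suml conj_tens_sum.
apply: eq_bigr => j _; by rewrite !conj_tensZ htmulZl htmulZl conj_tensZ pure_l.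
Qed.

End ConjTens.

Lemma conj_tensK (F : fieldType) m (M : 'M[F]_m) T :
  M \in unitmx -> conj_tens (invmx M) (conj_tens M T) = T.
Proof.
move=> M_unit; rewrite /conj_tens !mulmxA -trmx_mul mulmxV // trmx1 mul1mx.
by rewrite -mulmxA mulmxV // mulmx1.
Qed.

Section StructureAxioms.
Variables (S : comNzRingType) (m : nat) (H : hopf_data S m).

Definition halg_axioms : Prop :=
  [/\ (forall x y z, hmul H (hmul H x y) z = hmul H x (hmul H y z)),
      (forall x y, hmul H x y = hmul H y x),
      (forall x, hmul H (hu H) x = x) & hu H != 0].

Definition bialg_axioms : Prop :=
  [/\ (forall x y, hcom H (hmul H x y) = htmul H (hcom H x) (hcom H y)),
      hcom H (hu H) = htens (hu H) (hu H),
      (forall x y, heps H (hmul H x y) = heps H x * heps H y),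
      heps H (hu H) = 1 &
      (forall x, \row_j (\sum_i he H i * hcom H x i j) = x)].

Lemma hu_neq0 : heps H (hu H) = 1 -> hu H != 0.
Proof.
move=> heps_u; apply: contra_eqN heps_u => /eqP->.
by rewrite -(scale0r 0) hepsZ mul0r eq_sym oner_eq0.
Qed.

Lemma cc_hopf_halg : is_cc_hopf H -> halg_axioms.
Proof.
move=> [? [? [? [_ [_ [_ [_ [_ [_ [_ [heps_u _]]]]]]]]]]].
by split=> //; apply: hu_neq0.
Qed.

Lemma cc_hopf_bialg : is_cc_hopf H -> bialg_axioms.
Proof. by move=> [_ [_ [_ [_ [_ [counit [_ [? [? [? [? _]]]]]]]]]]]; split. Qed.

Lemma heps_primitive x : bialg_axioms -> primitive H x -> heps H x = 0.
Proof.
move=> [_ _ _ heps_u counit] x_prim.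
have : heps H x *: hu H = 0.
  apply: (@addIr _ x); rewrite add0r -[in RHS](counit x) x_prim; apply/rowP=> j.
  have hepsE (z : 'rV[S]_m) : \sum_i he H i * z 0 i = heps H z.
    by apply: eq_bigr => i _; rewrite mulrC.
  rewrite !mxE; under eq_bigr => i _ do rewrite mxE !htensE mulrDr !mulrA.
  by rewrite big_split /= -!mulr_suml !hepsE heps_u mul1r.
by move/(congr1 (heps H)); rewrite hepsZ heps_u mulr1 -(scale0r 0) hepsZ mul0r.
Qed.

End StructureAxioms.

Definition halg (S : comNzRingType) m (H : hopf_data S m) (hH : halg_axioms H) : Type :=
  'rV[S]_m.

Section HopfAlgebra.
Variables (S : comNzRingType) (m : nat) (H : hopf_data S m) (hH : halg_axioms H).

HB.instance Definition _ := GRing.Lmodule.on (halg hH).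

Let hmulA : associative (hmul H : halg hH -> halg hH -> halg hH).
Proof. by case: hH => ? ? ? ?. Qed.
Let hmulC : commutative (hmul H : halg hH -> halg hH -> halg hH).
Proof. by case: hH => ? ? ? ?. Qed.
Let hmul1 : left_id (hu H : halg hH) (hmul H).
Proof. by case: hH => ? ? ? ?. Qed.
Let hmulD : left_distributive (hmul H : halg hH -> halg hH -> halg hH) +%R.
Proof. exact: hmulDl. Qed.
Let hu_nz : (hu H : halg hH) != 0.
Proof. by case: hH => ? ? ? ?. Qed.

HB.instance Definition _ :=
  GRing.Zmodule_isComNzRing.Build (halg hH) hmulA hmulC hmul1 hmulD hu_nz.

Let scaleAl a (u v : halg hH) : a *: (u * v) = (a *: u) * v.
Proof. by rewrite /GRing.mul /= hmulZl. Qed.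

HB.instance Definition _ := GRing.Lmodule_isLalgebra.Build S (halg hH) scaleAl.
HB.instance Definition _ := GRing.Lalgebra_isComAlgebra.Build S (halg hH).

Lemma hpow_exp x k : hpow H x k = (x : halg hH) ^+ k.
Proof. by elim: k => [|k IH]; rewrite ?expr0 // exprS -IH. Qed.

Lemma exprZn_sum_pchar p n (c : 'I_n -> S) (x : 'I_n -> halg hH) :
  p \in [pchar S] -> (\sum_j c j *: x j) ^+ p = \sum_j c j ^+ p *: x j ^+ p.
Proof.
move=> pS; have pH : p \in [pchar (halg hH)].
  by rewrite inE (pcharf_prime pS) /= -scaler_nat (pcharf0 pS) scale0r.
rewrite -(pFrobenius_autE pH) rmorph_sum; apply: eq_bigr => j _.
by rewrite /= pFrobenius_autE exprZn.
Qed.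

End HopfAlgebra.

Lemma assoc_matrix_expr (S : comNzRingType) (p n m : nat) (H : hopf_data S m)
    (hH : halg_axioms H) (t : 'I_n -> 'rV[S]_m) (A : 'M[S]_n) :
  assoc_matrix p H t A -> forall i, (t i : halg hH) ^+ p = \sum_j A j i *: (t j : halg hH).
Proof. by move=> [_ tA] i; rewrite -hpow_exp tA. Qed.

Section Exponents.
Variables (p n : nat).

Local Notation exps := {ffun 'I_n -> 'I_p}.

Lemma card_exps : #|exps| = (p ^ n)%N.
Proof. by rewrite card_ffun !card_ord. Qed.

Definition exps_of_index (k : 'I_(p ^ n)) : exps :=
  enum_val (cast_ord (esym card_exps) k).
Definition index_of_exps (a : exps) : 'I_(p ^ n) := cast_ord card_exps (enum_rank a).

Lemma index_of_expsK : cancel index_of_exps exps_of_index.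
Proof. by move=> a; rewrite /exps_of_index /index_of_exps cast_ordK enum_rankK. Qed.

Definition exps_deg (a : exps) : nat := \sum_i (a i : nat).

Definition set_exp (a : exps) i (v : 'I_p) : exps := [ffun j => if j == i then v else a j].

Lemma exps_deg_set (a : exps) i (v : 'I_p) :
  (exps_deg (set_exp a i v) + a i = exps_deg a + v)%N.
Proof.
rewrite /exps_deg [in RHS](bigD1 i) //= (bigD1 i) //= ffunE eqxx.
under eq_bigr => j /negbTE ji do rewrite ffunE ji.
by move: (\sum_(_ | _) _)%N => d; lia.
Qed.

End Exponents.

Section MonomialBasis.
Variables (F : fieldType) (p n : nat) (H : hopf_data F (p ^ n)) (hH : halg_axioms H).
Hypothesis p_gt1 : (1 < p)%N.
Variables (t : 'I_n -> 'rV[F]_(p ^ n)) (A : 'M[F]_n).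
Hypothesis tA : assoc_matrix p H t A.

Local Notation alg := (halg hH).
Local Notation exps := {ffun 'I_n -> 'I_p}.

Let p_gt0 : (0 < p)%N. Proof. exact: ltnW. Qed.
Let exp0 : 'I_p := Ordinal p_gt0.

Definition hmono (a : exps) : alg := \prod_i (t i : alg) ^+ a i.

Definition mono_mx : 'M[F]_(p ^ n) := \matrix_k (hmono (exps_of_index k) : 'rV_(p ^ n)).

Local Notation in_mono x := ((x : 'rV[F]_(p ^ n)) <= mono_mx)%MS.

Lemma row_mono_mx (a : exps) : row (index_of_exps a) mono_mx = hmono a.
Proof. by rewrite rowK index_of_expsK. Qed.

Lemma hmono_sub (a : exps) : in_mono (hmono a).
Proof. by rewrite -row_mono_mx row_sub. Qed.

Lemma hmono0 : hmono [ffun => exp0] = 1.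
Proof. by apply: big1 => i _; rewrite ffunE expr0. Qed.

Lemma hmono_set (a : exps) i (v : 'I_p) :
  hmono (set_exp a i v) = (\prod_(j | j != i) (t j : alg) ^+ a j) * (t i : alg) ^+ v.
Proof.
rewrite /hmono (bigD1 i) //= ffunE eqxx mulrC; congr (_ * _).
by apply: eq_bigr => j /negbTE ji; rewrite ffunE ji.
Qed.

Lemma hmono_mulr_lt (a : exps) i (lt_ai : ((a i).+1 < p)%N) :
  hmono a * (t i : alg) = hmono (set_exp a i (Ordinal lt_ai)).
Proof. by rewrite hmono_set /hmono (bigD1 i) //= [X in X * _]mulrC -mulrA -exprSr. Qed.

(* Multiplying by t i overflows the exponent a i: reduce t i ^+ p with the matrix A. *)
Lemma hmono_mulr_overflow (a : exps) i : (a i).+1 = p ->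
  hmono a * (t i : alg) = \sum_j A j i *: (hmono (set_exp a i exp0) * (t j : alg)).
Proof.
move=> ai; rewrite hmono_set expr0 mulr1 /hmono (bigD1 i) //= [X in X * _]mulrC.
rewrite -mulrA -exprSr ai.
by rewrite (assoc_matrix_expr hH tA) mulr_sumr; apply: eq_bigr => j _; rewrite scalerAr.
Qed.

Lemma exps_deg_overflow (a : exps) i :
  (a i).+1 = p -> (exps_deg (set_exp a i exp0) < exps_deg a)%N.
Proof. by move=> ai; have := exps_deg_set a i exp0; rewrite /= addn0; lia. Qed.

Lemma hmono_mulr_sub (a : exps) i : in_mono (hmono a * (t i : alg))%R.
Proof.
have [N] := ubnP (exps_deg a); elim: N a i => // N IH a i deg_a.
case: (ltnP (a i).+1 p) => [lt_ai | ge_ai]; first by rewrite hmono_mulr_lt hmono_sub.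
have ai : (a i).+1 = p by apply/eqP; rewrite eqn_leq ge_ai ltn_ord.
rewrite hmono_mulr_overflow //; apply: summx_sub => j _; apply: scalemx_sub.
by apply: IH; apply: leq_trans (exps_deg_overflow ai) _.
Qed.

Lemma mono_mx_coord (w : alg) : in_mono w ->
  exists c : 'I_(p ^ n) -> F, (w : alg) = \sum_k c k *: hmono (exps_of_index k).
Proof.
move/submxP=> [D ->]; exists (D 0); rewrite mulmx_sum_row.
by apply: eq_bigr => k _; rewrite rowK.
Qed.

Lemma mono_span_mulr_t (w : alg) i : in_mono w -> in_mono (w * (t i : alg))%R.
Proof.
move/mono_mx_coord=> [c ->]; rewrite mulr_suml; apply: summx_sub => k _.
by rewrite -scalerAl; apply/scalemx_sub/hmono_mulr_sub.
Qed.

Hypothesis H_pg : prim_generated H.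

Lemma sub_mono_mx (x : alg) : in_mono x.
Proof.
have [[_ _ t_span] _] := tA.
suff mulr_sub (y z : alg) : in_mono z -> in_mono (z * y)%R.
  by rewrite -[x]mul1r; apply/mulr_sub; rewrite -hmono0 hmono_sub.
move: y z; apply: (H_pg (P := fun y => forall z : alg, in_mono z -> in_mono (z * y)%R)).
- move=> y /t_span [c ->] z z_sub; rewrite mulr_sumr; apply: summx_sub => i _.
  by rewrite -scalerAr; apply/scalemx_sub/mono_span_mulr_t.
- by move=> z; rewrite [hu H]/(1 : alg) mulr1.
- by move=> y1 y2 IH1 IH2 z z_sub; rewrite mulrDr; apply: addmx_sub; auto.
- by move=> y1 y2 IH1 IH2 z z_sub; rewrite [hmul _ _ _]/(_ * _ : alg) mulrA; auto.
- by move=> c y IH z z_sub; rewrite -scalerAr; apply/scalemx_sub/IH.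
Qed.

Lemma mono_mx_unit : mono_mx \in unitmx.
Proof. by rewrite -row_full_unit -sub1mx; apply/row_subP => i; apply: sub_mono_mx. Qed.

End MonomialBasis.

Section MonomialIso.
Variables (F : fieldType) (p n : nat) (H1 H2 : hopf_data F (p ^ n)).
Hypotheses (hH1 : halg_axioms H1) (hH2 : halg_axioms H2) (p_gt1 : (1 < p)%N).
Variables (t s : 'I_n -> 'rV[F]_(p ^ n)) (A : 'M[F]_n).
Hypotheses (tA : assoc_matrix p H1 t A) (sA : assoc_matrix p H2 s A).
Hypotheses (H1_pg : prim_generated H1) (H2_pg : prim_generated H2).

Local Notation alg1 := (halg hH1).
Local Notation alg2 := (halg hH2).

(* Maps each monomial t^a of H1 to the monomial s^a of H2. *)
Definition mono_iso : 'M[F]_(p ^ n) := invmx (mono_mx hH1 t) *m mono_mx hH2 s.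

Let phi (x : alg1) : alg2 := x *m mono_iso.

Let mono1_unit : mono_mx hH1 t \in unitmx.
Proof. exact: (mono_mx_unit hH1 p_gt1 tA H1_pg). Qed.

Lemma mono_iso_unit : mono_iso \in unitmx.
Proof. by rewrite unitmx_mul unitmx_inv mono1_unit (mono_mx_unit hH2 p_gt1 sA H2_pg). Qed.

Let phi_hmono (a : {ffun 'I_n -> 'I_p}) : phi (hmono hH1 t a) = hmono hH2 s a.
Proof.
by rewrite /phi /mono_iso -(row_mono_mx hH1) -row_mul mulKVmx // row_mono_mx.
Qed.

Let phi_sum (I : Type) (r : seq I) (P : pred I) (G : I -> alg1) :
  phi (\sum_(i <- r | P i) G i) = \sum_(i <- r | P i) phi (G i).
Proof. exact: mulmx_suml. Qed.

Let phiZ c (x : alg1) : phi (c *: x) = c *: phi x.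
Proof. by rewrite /phi -scalemxAl. Qed.

Let phi1 : phi 1 = 1.
Proof. by rewrite -(hmono0 hH1 p_gt1 t) phi_hmono hmono0. Qed.

Let phi_hmono_mulr (a : {ffun 'I_n -> 'I_p}) i :
  phi (hmono hH1 t a * (t i : alg1)) = hmono hH2 s a * (s i : alg2).
Proof.
have [N] := ubnP (exps_deg a); elim: N a i => // N IH a i deg_a.
case: (ltnP (a i).+1 p) => [lt_ai | ge_ai].
  by rewrite (hmono_mulr_lt hH1 t lt_ai) (hmono_mulr_lt hH2 s lt_ai) phi_hmono.
have ai : (a i).+1 = p by apply/eqP; rewrite eqn_leq ge_ai ltn_ord.
rewrite (hmono_mulr_overflow hH1 p_gt1 tA ai) (hmono_mulr_overflow hH2 p_gt1 sA ai) phi_sum.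
apply: eq_bigr => j _; rewrite phiZ IH //.
exact: leq_trans (exps_deg_overflow p_gt1 ai) _.
Qed.

Let phi_mulr_t (w : alg1) i : phi (w * (t i : alg1)) = phi w * (s i : alg2).
Proof.
have [c ->] := mono_mx_coord (sub_mono_mx p_gt1 tA H1_pg w).
rewrite mulr_suml !phi_sum mulr_suml; apply: eq_bigr => k _.
by rewrite -scalerAl !phiZ phi_hmono_mulr phi_hmono scalerAl.
Qed.

Let phi_t i : phi (t i) = s i.
Proof. by have := phi_mulr_t 1 i; rewrite !mul1r phi1 mul1r. Qed.

Let phi_prim (x : alg1) : primitive H1 x ->
  exists c : 'I_n -> F, x = \sum_i c i *: t i /\ phi x = \sum_i c i *: s i.
Proof.
have [[_ _ t_span] _] := tA.
move=> /t_span [c ->]; exists c; split => //.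
by rewrite phi_sum; apply: eq_bigr => i _; rewrite phiZ phi_t.
Qed.

Let phi_primitive (x : alg1) : primitive H1 x -> primitive H2 (phi x).
Proof.
have [[s_prim _ _] _] := sA.
by move=> /phi_prim [c [_ ->]]; apply: primitive_sum.
Qed.

Let phi_mul (x y : alg1) : phi (x * y) = phi x * phi y.
Proof.
move: y x; apply: (H1_pg (P := fun y => forall x : alg1, phi (x * y) = phi x * phi y)).
- move=> y /phi_prim [c [-> ->]] x; rewrite mulr_sumr !phi_sum mulr_sumr.
  by apply: eq_bigr => i _; rewrite -scalerAr !phiZ phi_mulr_t scalerAr.
- by move=> x; rewrite [hu H1]/(1 : alg1) mulr1 phi1 mulr1.
- by move=> y1 y2 IH1 IH2 x; rewrite [x * _]mulrDr /phi !mulmxDl -!/(phi _) IH1 IH2 mulrDr.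
- by move=> y1 y2 IH1 IH2 x; rewrite [hmul _ _ _]/(_ * _ : alg1) mulrA !(IH1, IH2) mulrA.
- by move=> c y IH x; rewrite -scalerAr !phiZ IH scalerAr.
Qed.

Hypotheses (H1_bi : bialg_axioms H1) (H2_bi : bialg_axioms H2).

Lemma hopf_iso_mono : hopf_iso H1 H2 mono_iso.
Proof.
have hmulM x y : hmul H2 (x *m mono_iso) (y *m mono_iso) = hmul H1 x y *m mono_iso.
  by symmetry; apply: phi_mul.
have huM : hu H1 *m mono_iso = hu H2 by apply: phi1.
have [hcomM1 hcomu1 hepsM1 hepsu1 _] := H1_bi.
have [hcomM2 hcomu2 hepsM2 hepsu2 _] := H2_bi.
split=> //; first exact: mono_iso_unit.
- apply: (H1_pg (P := fun x => hcom H2 (x *m mono_iso) = conj_tens mono_iso (hcom H1 x))).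
  + move=> x x_prim; rewrite (conj_tens_primitive huM x_prim).
    exact: phi_primitive x_prim.
  + by rewrite huM hcomu1 hcomu2 conj_tens_htens huM.
  + by move=> x y IHx IHy; rewrite mulmxDl !hcomD IHx IHy conj_tensD.
  + by move=> x y IHx IHy; rewrite -hmulM hcomM2 IHx IHy (conj_tens_htmul hmulM) hcomM1.
  + by move=> c x IH; rewrite -scalemxAl !hcomZ IH conj_tensZ.
- apply: (H1_pg (P := fun x => heps H2 (x *m mono_iso) = heps H1 x)).
  + move=> x x_prim.
    by rewrite (heps_primitive H1_bi x_prim) (heps_primitive H2_bi (phi_primitive x_prim)).
  + by rewrite huM hepsu1 hepsu2.
  + by move=> x y IHx IHy; rewrite mulmxDl !hepsD IHx IHy.
  + by move=> x y IHx IHy; rewrite -hmulM hepsM2 hepsM1 IHx IHy.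
  + by move=> c x IH; rewrite -scalemxAl !hepsZ IH.
Qed.

End MonomialIso.

Section PrimitiveBases.
Variables (F : fieldType) (m n : nat) (H : hopf_data F m).

Lemma prim_basis_coord_mx (s t : 'I_n -> 'rV[F]_m) :
  prim_basis H s -> (forall i, primitive H (t i)) ->
  exists Theta : 'M[F]_n, forall i, t i = \sum_j Theta j i *: s j.
Proof.
move=> [_ _ s_span] t_prim.
have /fin_all_exists [c tc] i : exists c : 'I_n -> F, t i = \sum_j c j *: s j.
  exact: s_span.
by exists (\matrix_(j, i) c i j) => i; rewrite tc; apply: eq_bigr => j _; rewrite mxE.
Qed.

Lemma prim_basis_change (s : 'I_n -> 'rV[F]_m) (Theta : 'M[F]_n) :
  prim_basis H s -> Theta \in unitmx -> prim_basis H (fun i => \sum_j Theta j i *: s j).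
Proof.
move=> [s_prim s_free s_span] Theta_unit; split.
- by move=> i; apply: primitive_sum.
- move=> c c0; suff /colP c_eq0 : \col_j c j = 0 by move=> i; have := c_eq0 i; rewrite !mxE.
  rewrite -[\col_j c j](mulKmx Theta_unit) [Theta *m _](free_coef_mx_eq (Y := 0) s_free).
    by rewrite mulmx0.
  move=> i; rewrite ord1 -sum_scale_mulmx [RHS]big1 => [|k _]; last by rewrite mxE scale0r.
  by rewrite -[RHS]c0; apply: eq_bigr => j _; rewrite mxE.
- move=> x /s_span [d ->].
  exists (fun i => (invmx Theta *m \col_j d j) i 0).
  rewrite -sum_scale_mulmx; apply: eq_bigr => j _; rewrite mxE; congr (_ *: _).
  by rewrite sum_scale_mulmx mulmxV // sum_scale_mx1.
Qed.

Lemma assoc_matrix_hopf_iso p (H2 : hopf_data F m) (M : 'M[F]_m)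
    (t : 'I_n -> 'rV[F]_m) (A : 'M[F]_n) :
  hopf_iso H H2 M -> assoc_matrix p H t A -> assoc_matrix p H2 (fun i => t i *m M) A.
Proof.
move=> [M_unit hmulM huM hcomM _] [[t_prim t_free t_span] tA].
have prim_iso x : primitive H x -> primitive H2 (x *m M).
  move=> x_prim; rewrite /primitive hcomM -[_ *m M]/(conj_tens M _).
  exact: conj_tens_primitive huM x_prim.
have prim_iso_inv y : primitive H2 y -> primitive H (y *m invmx M).
  move=> y_prim; rewrite /primitive -[hcom H _](conj_tensK _ M_unit) [conj_tens M _]/conj_tens.
  rewrite -hcomM mulmxKV //.
  have huM' : hu H2 *m invmx M = hu H by rewrite -huM mulmxK.
  by rewrite (conj_tens_primitive huM' y_prim).
split; first split.
- by move=> i; apply: prim_iso.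
- move=> c; under eq_bigr do rewrite scalemxAl.
  rewrite -mulmx_suml => /(congr1 (mulmx^~ (invmx M))).
  by rewrite mulmxK // mul0mx; apply: t_free.
- move=> y /prim_iso_inv /t_span [c yc]; exists c.
  rewrite -[y](mulmxKV M_unit) yc mulmx_suml.
  by apply: eq_bigr => i _; rewrite scalemxAl.
- move=> i; have -> k : hpow H2 (t i *m M) k = hpow H (t i) k *m M.
    by elim: k => [|k IH] //=; rewrite IH hmulM.
  by rewrite tA mulmx_suml; apply: eq_bigr => j _; rewrite scalemxAl.
Qed.

End PrimitiveBases.

Section FrobeniusConjugacy.
Variables (F : fieldType) (p m n : nat) (H : hopf_data F m) (hH : halg_axioms H).
Hypothesis pF : p \in [pchar F].

Local Notation frob Theta := (map_mx (fun x => x ^+ p) Theta).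

Lemma assoc_matrix_comb_expr (s : 'I_n -> 'rV[F]_m) (B Theta : 'M[F]_n) i :
  assoc_matrix p H s B ->
  (\sum_j Theta j i *: (s j : halg hH)) ^+ p = \sum_k (B *m frob Theta) k i *: (s k : halg hH).
Proof.
move=> sB; rewrite exprZn_sum_pchar // -sum_scale_mulmx; apply: eq_bigr => j _.
by rewrite (assoc_matrix_expr hH sB) mxE.
Qed.

Lemma assoc_matrix_change (s : 'I_n -> 'rV[F]_m) (A B Theta : 'M[F]_n) :
  assoc_matrix p H s B -> Theta \in unitmx -> Theta *m A = B *m frob Theta ->
  assoc_matrix p H (fun i => \sum_j Theta j i *: s j) A.
Proof.
move=> sB Theta_unit ThetaAB; split; first by case: sB => s_basis _; apply: prim_basis_change.
by move=> i; rewrite (hpow_exp hH) (assoc_matrix_comb_expr _ _ sB) -ThetaAB -sum_scale_mulmx.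
Qed.

Lemma assoc_matrix_transition (t s : 'I_n -> 'rV[F]_m) (A B : 'M[F]_n) :
  assoc_matrix p H t A -> assoc_matrix p H s B ->
  exists2 Theta : 'M[F]_n, Theta \in unitmx & Theta *m A = B *m frob Theta.
Proof.
move=> tA sB; have [[t_prim t_free _] _] := tA.
have [s_basis _] := sB; have [s_prim s_free _] := s_basis.
have [Theta tTheta] := prim_basis_coord_mx s_basis t_prim.
have [Theta' sTheta'] := prim_basis_coord_mx tA.1 s_prim.
exists Theta.
  suff /mulmx1_unit[] : Theta' *m Theta = 1%:M by [].
  apply: (free_coef_mx_eq t_free) => i; rewrite sum_scale_mx1 -sum_scale_mulmx tTheta.
  by apply: eq_bigr => j _; rewrite sTheta'.
apply: (free_coef_mx_eq s_free) => i.
rewrite -sum_scale_mulmx -(assoc_matrix_comb_expr _ _ sB) -tTheta.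
by rewrite (assoc_matrix_expr hH tA); apply: eq_bigr => j _; rewrite tTheta.
Qed.

End FrobeniusConjugacy.

Lemma hopf_iso_frobenius_conj (F : fieldType) (p n : nat) (H1 H2 : hopf_data F (p ^ n))
    (hH1 : halg_axioms H1) (hH2 : halg_axioms H2)
    (t s : 'I_n -> 'rV[F]_(p ^ n)) (A B : 'M[F]_n) :
  p \in [pchar F] -> bialg_axioms H1 -> bialg_axioms H2 ->
  prim_generated H1 -> prim_generated H2 ->
  assoc_matrix p H1 t A -> assoc_matrix p H2 s B ->
  (exists M, hopf_iso H1 H2 M) <->
  (exists Theta, Theta \in unitmx /\ Theta *m A = B *m map_mx (fun x => x ^+ p) Theta).
Proof.
move=> pF H1_bi H2_bi H1_pg H2_pg tA sB; split.
- move=> [M iso_M].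
  have tMA := assoc_matrix_hopf_iso iso_M tA.
  by have [Theta] := assoc_matrix_transition hH2 pF tMA sB; exists Theta.
- move=> [Theta [Theta_unit ThetaAB]].
  have s'A := assoc_matrix_change hH2 pF sB Theta_unit ThetaAB.
  have p_gt1 := prime_gt1 (pcharf_prime pF).
  by eexists; apply: (hopf_iso_mono hH1 hH2 p_gt1 tA s'A).
Qed.

Section FractionField.
Variables (R : idomainType) (K : fieldType) (f : {rmorphism R -> K}).
Hypothesis f_frac : is_frac_field f.

Let f_inj : injective f. Proof. by case: f_frac. Qed.

Lemma frac_field_neq0 b : b != 0 -> f b != 0.
Proof. by apply: contraNneq => /eqP; rewrite -(rmorph0 f) => /eqP/f_inj->. Qed.

Lemma frac_field_row k (x : 'rV[K]_k) :
  exists (b : R) (y : 'rV[R]_k), b != 0 /\ x = (f b)^-1 *: map_mx f y.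
Proof.
have /fin_all_exists [a ab] j : exists a : R, exists b : R, b != 0 /\ x 0 j = f a / f b.
  by case: f_frac => _; apply.
have /fin_all_exists [b b_x] := ab.
exists (\prod_j b j), (\row_j (a j * \prod_(l | l != j) b l)); split.
  by apply/prodf_neq0 => j _; have [] := b_x j.
apply/rowP=> j; rewrite !mxE rmorphM !rmorph_prod (bigD1 j) //=.
have [/frac_field_neq0 bj_neq0 ->] := b_x j.
have : \prod_(l | l != j) f (b l) != 0.
  by apply/prodf_neq0 => l _; apply: frac_field_neq0; have [] := b_x l.
by move: (\prod_(_ | _) _) => P P_neq0; field; rewrite bj_neq0 P_neq0.
Qed.

Lemma frac_field_row_ind k (P : 'rV[K]_k -> Prop) :
  (forall y, P (map_mx f y)) -> (forall c x, P x -> P (c *: x)) -> forall x, P x.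
Proof. by move=> Pf PZ x; have [b [y [_ ->]]] := frac_field_row x; apply: PZ. Qed.

End FractionField.

Lemma map_mx_injective (R S : Type) (f : R -> S) k l :
  injective f -> injective (map_mx f : 'M[R]_(k, l) -> 'M[S]_(k, l)).
Proof.
move=> f_inj x y /matrixP xy; apply/matrixP=> i j; apply: f_inj.
by have := xy i j; rewrite !mxE.
Qed.

Section HopfMap.
Variables (R S : comNzRingType) (f : {rmorphism R -> S}) (m : nat) (H : hopf_data R m).

Local Notation Hf := (hopf_map f H).

Lemma hmul_map (x y : 'rV[R]_m) :
  hmul Hf (map_mx f x) (map_mx f y) = map_mx f (hmul H x y).
Proof.
apply/rowP=> k; rewrite !mxE rmorph_sum; apply: eq_bigr => i _.
by rewrite rmorph_sum; apply: eq_bigr => j _; rewrite !mxE /= !rmorphM.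
Qed.

Lemma hcom_map (x : 'rV[R]_m) : hcom Hf (map_mx f x) = map_mx f (hcom H x).
Proof.
apply/matrixP=> i j; rewrite !mxE rmorph_sum.
by apply: eq_bigr => k _; rewrite !mxE /= rmorphM.
Qed.

Lemma heps_map (x : 'rV[R]_m) : heps Hf (map_mx f x) = f (heps H x).
Proof. by rewrite /heps rmorph_sum; apply: eq_bigr => k _; rewrite !mxE /= rmorphM. Qed.

Lemma htens_map (x y : 'rV[R]_m) : htens (map_mx f x) (map_mx f y) = map_mx f (htens x y).
Proof. by rewrite /htens map_mxM map_trmx. Qed.

Lemma htmul_map (T U : 'M[R]_m) : htmul Hf (map_mx f T) (map_mx f U) = map_mx f (htmul H T U).
Proof.
apply/matrixP=> k l; rewrite !mxE rmorph_sum; apply: eq_bigr => i _.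
rewrite rmorph_sum; apply: eq_bigr => j _; rewrite rmorph_sum; apply: eq_bigr => i' _.
by rewrite rmorph_sum; apply: eq_bigr => j' _; rewrite !mxE /= !rmorphM.
Qed.

Lemma hpow_map (x : 'rV[R]_m) k : hpow Hf (map_mx f x) k = map_mx f (hpow H x k).
Proof. by elim: k => [|k IH] //=; rewrite IH hmul_map. Qed.

Lemma primitive_map (x : 'rV[R]_m) : primitive H x -> primitive Hf (map_mx f x).
Proof. by rewrite /primitive hcom_map [hu Hf]/= !htens_map -map_mxD => ->. Qed.

Lemma primitive_map_inj (x : 'rV[R]_m) :
  injective f -> primitive Hf (map_mx f x) -> primitive H x.
Proof.
move=> /map_mx_injective f_inj.
by rewrite /primitive hcom_map [hu Hf]/= !htens_map -map_mxD => /f_inj.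
Qed.

End HopfMap.

Section BaseChange.
Variables (R : idomainType) (K : fieldType) (f : {rmorphism R -> K}).
Variables (m : nat) (H : hopf_data R m).
Hypothesis f_frac : is_frac_field f.

Local Notation HK := (hopf_map f H).
Local Notation row_ind := (frac_field_row_ind f_frac).

Lemma halg_axioms_map : halg_axioms H -> halg_axioms HK.
Proof.
move=> [hmulA hmulC hmul1 hu_neq0]; split.
- apply: row_ind => [x|c x IH] y z; last by rewrite !(hmulZl, hmulZr) IH.
  move: y z; apply: row_ind => [y|c y IH] z; last by rewrite !(hmulZl, hmulZr) IH.
  move: z; apply: row_ind => [z|c z IH]; last by rewrite !(hmulZl, hmulZr) IH.
  by rewrite !hmul_map hmulA.
- apply: row_ind => [x|c x IH] y; last by rewrite !(hmulZl, hmulZr) IH.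
  move: y; apply: row_ind => [y|c y IH]; last by rewrite !(hmulZl, hmulZr) IH.
  by rewrite !hmul_map hmulC.
- apply: row_ind => [x|c x IH]; last by rewrite !(hmulZl, hmulZr) IH.
  by rewrite [hu HK]/= hmul_map hmul1.
- apply: contra hu_neq0 => /eqP hu0; apply/eqP/(map_mx_injective f_frac.1).
  by rewrite map_mx0 -hu0.
Qed.

Lemma bialg_axioms_map : bialg_axioms H -> bialg_axioms HK.
Proof.
move=> [hcomM hcomu hepsM hepsu counit]; split.
- apply: row_ind => [x|c x IH] y; last by rewrite !(hmulZl, hcomZ, htmulZl) IH.
  move: y; apply: row_ind => [y|c y IH]; last by rewrite !(hmulZr, hcomZ, htmulZr) IH.
  by rewrite hmul_map !hcom_map htmul_map hcomM.
- by rewrite [hu HK]/= hcom_map htens_map hcomu.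
- apply: row_ind => [x|c x IH] y; last by rewrite hmulZl !hepsZ IH mulrA.
  move: y; apply: row_ind => [y|c y IH]; last by rewrite hmulZr !hepsZ IH mulrCA.
  by rewrite hmul_map !heps_map hepsM rmorphM.
- by rewrite [hu HK]/= heps_map hepsu rmorph1.
- apply: row_ind => [x|c x IH].
    rewrite -[in RHS](counit x) hcom_map; apply/rowP=> j; rewrite !mxE rmorph_sum.
    by apply: eq_bigr => i _; rewrite !mxE rmorphM.
  apply/rowP=> j; rewrite -[in RHS]IH hcomZ !mxE mulr_sumr.
  by apply: eq_bigr => i _; rewrite !mxE mulrCA.
Qed.

Lemma prim_generated_map : prim_generated H -> prim_generated HK.
Proof.
move=> H_pg P P_prim P1 PD PM PZ; apply: row_ind => [y|c x]; last exact: PZ.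
move: y; apply: (H_pg (fun y => P (map_mx f y))).
- by move=> y y_prim; apply/P_prim/primitive_map.
- exact: P1.
- by move=> x y Px Py; rewrite map_mxD; apply: PD.
- by move=> x y Px Py; rewrite -hmul_map; apply: PM.
- by move=> c x Px; rewrite map_mxZ; apply: PZ.
Qed.

Lemma prim_basis_map n (t : 'I_n -> 'rV[R]_m) :
  prim_basis H t -> prim_basis HK (fun i => map_mx f (t i)).
Proof.
move=> [t_prim t_free t_span]; split.
- by move=> i; apply: primitive_map.
- move=> c; have [b [y [fb_neq0 c_by]]] := frac_field_row f_frac (\row_i c i).
  move/(frac_field_neq0 f_frac): fb_neq0 => fb_neq0.
  have {}c_by i : c i = (f b)^-1 * f (y 0 i).
    by have /rowP/(_ i) := c_by; rewrite !mxE.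
  under eq_bigr => i _ do rewrite c_by -scalerA -map_mxZ.
  rewrite -scaler_sumr -map_mx_sum => /eqP; rewrite scaler_eq0 invr_eq0 (negbTE fb_neq0) /=.
  rewrite -(map_mx0 f) => /eqP/(map_mx_injective f_frac.1)/t_free y0 i.
  by rewrite c_by y0 rmorph0 mulr0.
- move=> x; have [b [y [/(frac_field_neq0 f_frac) fb_neq0 ->]]] := frac_field_row f_frac x.
  move=> /(primitiveZ (f b)); rewrite scalerA mulfV // scale1r.
  move=> /(primitive_map_inj f_frac.1) /t_span [d ->].
  exists (fun i => (f b)^-1 * f (d i)); rewrite map_mx_sum scaler_sumr.
  by apply: eq_bigr => i _; rewrite map_mxZ scalerA.
Qed.

Lemma assoc_matrix_map p n (t : 'I_n -> 'rV[R]_m) (A : 'M[R]_n) :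
  assoc_matrix p H t A -> assoc_matrix p HK (fun i => map_mx f (t i)) (map_mx f A).
Proof.
move=> [t_basis tA]; split; first exact: prim_basis_map.
move=> i; rewrite hpow_map tA map_mx_sum.
by apply: eq_bigr => j _; rewrite map_mxZ mxE.
Qed.

End BaseChange.

Unset Implicit Arguments.
Set Strict Implicit.

Theorem proposition4p1 (R : idomainType) (K : fieldType) (f : {rmorphism R -> K})
  (p n : nat) (H1 H2 : hopf_data R (p ^ n))
  (t1 t2 : 'I_n -> 'rV[R]_(p ^ n)) (A B : 'M[R]_n) :
  is_dvr R -> is_frac_field f -> p \in [pchar R] ->
  pg_hopf H1 -> pg_hopf H2 ->
  assoc_matrix p H1 t1 A -> assoc_matrix p H2 t2 B ->
  (exists M : 'M[K]_(p ^ n), hopf_iso (hopf_map f H1) (hopf_map f H2) M) <->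
  (exists Theta : 'M[K]_n, Theta \in unitmx /\
     Theta *m map_mx f A = map_mx f B *m map_mx (fun x => x ^+ p) Theta).
Proof.
move=> _ f_frac pR [H1_cc H1_pg] [H2_cc H2_pg] t1A t2B.
apply: hopf_iso_frobenius_conj.
- exact: halg_axioms_map (cc_hopf_halg H1_cc).
- exact: halg_axioms_map (cc_hopf_halg H2_cc).
- exact: rmorph_pchar pR.
- exact: bialg_axioms_map (cc_hopf_bialg H1_cc).
- exact: bialg_axioms_map (cc_hopf_bialg H2_cc).
- exact: prim_generated_map.
- exact: prim_generated_map.
- exact: assoc_matrix_map t1A.
- exact: assoc_matrix_map t2B.
Qed.
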